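(* For every interaction matrix $K\in[0,1]^{d\times d}$ there exists $a_0>0$ such that every discrete time regulatory network with interaction matrix $K$ (and any compatible threshold and activation matrices) and contraction rate $a\in[0,a_0)$ satisfies coordinatewise injectivity.
   Context: An interaction matrix is $K\in[0,1]^{d\times d}$ with $\sum_iK_{i,j}=1$ for each $j$; a compatible activation matrix $s\in\{-1,0,1\}^{d\times d}$ and threshold matrix $T\in[0,1]^{d\times d}$ satisfy $s_{i,j}=0$ iff $K_{i,j}=0$ and $T_{i,j}=0$ iff $K_{i,j}=0$. The network with contraction rate $a\in[0,1]$ is $F(x)_j=ax_j+(1-a)\sum_iK_{i,j}H(s_{i,j}(x_i-T_{i,j}))$ on $[0,1]^d$, with $H(x)=0$ for $x\le 0$ and $1$ otherwise. For each $j$ let $\mathcal F_j=\{x\mapsto ax+(1-a)\sum_{i=1}^d\epsilon_iK_{i,j}:\ \epsilon\in\{0,1\}^d\}$, maps $[0,1]\to[0,1]$. The network satisfies coordinatewise injectivity if for each $j$ and all $f,f'\in\mathcal F_j$ with $f\ne f'$, $f([0,1])\cap f'([0,1])=\emptyset$. *)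

From HB Require Import structures.
From mathcomp Require Import all_boot all_order all_algebra.
From mathcomp Require Import reals.
Set Implicit Arguments. Unset Strict Implicit. Unset Printing Implicit Defensive.
Import Order.TTheory GRing.Theory Num.Theory.
Local Open Scope ring_scope.

Section Defs.
Variables (R : realType) (d : nat).

Definition interaction_matrix (K : 'M[R]_d) : Prop :=
  (forall i j, 0 <= K i j <= 1) /\ (forall j, \sum_(i < d) K i j = 1).

Definition compatible (K : 'M[R]_d) (s : 'M[int]_d) (T : 'M[R]_d) : Prop :=
  (forall i j, s i j = -1 \/ s i j = 0 \/ s i j = 1) /\
  (forall i j, 0 <= T i j <= 1) /\
  (forall i j, s i j = 0 <-> K i j = 0) /\
  (forall i j, T i j = 0 <-> K i j = 0).

Definition Heav (x : R) : R := if x <= 0 then 0 else 1.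

Definition network (K : 'M[R]_d) (s : 'M[int]_d) (T : 'M[R]_d) (a : R)
  (x : 'I_d -> R) (j : 'I_d) : R :=
  a * x j + (1 - a) * \sum_(i < d) K i j * Heav ((s i j)%:~R * (x i - T i j)).

Definition Ffam (K : 'M[R]_d) (a : R) (j : 'I_d) (f : R -> R) : Prop :=
  exists eps : 'I_d -> bool,
    f = (fun x => a * x + (1 - a) * \sum_(i < d) (eps i)%:R * K i j).

Definition coord_injective (K : 'M[R]_d) (a : R) : Prop :=
  forall (j : 'I_d) (f f' : R -> R), Ffam K a j f -> Ffam K a j f' -> f <> f' ->
    forall x y : R, 0 <= x <= 1 -> 0 <= y <= 1 -> f x <> f' y.

End Defs.

From HB Require Import structures.
From mathcomp Require Import all_boot all_order all_algebra.
From mathcomp Require Import reals.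
From mathcomp Require Import lra.
Set Implicit Arguments. Unset Strict Implicit. Unset Printing Implicit Defensive.
Import Order.TTheory GRing.Theory Num.Theory.
Local Open Scope ring_scope.

(* A map of F_j is x |-> a x + (1 - a) c_eps, so F_j sends [0,1] onto
   [(1 - a) c_eps, (1 - a) c_eps + a]. Two such intervals are disjoint as soon
   as a < (1 - a) |c_eps - c_eps'|. The offsets c_eps range over a finite set,
   so their distinct values are separated by some gap delta > 0, and every
   a < delta / (1 + delta) works. *)

Lemma finite_gap (R : realDomainType) (I : finType) (g : I -> R) :
  exists2 delta : R, 0 < delta &
    forall i j, g i != g j -> delta <= `|g i - g j|.
Proof.
exists (\big[Num.min/1]_(p : I * I | g p.1 != g p.2) `|g p.1 - g p.2|).
  by apply: lt_bigmin => // p; rewrite normr_gt0 subr_eq0.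
by move=> i j gij; exact: (@bigmin_le_cond _ _ _ _ (i, j)).
Qed.

Lemma affine_images_disjoint (R : realDomainType) (a c c' x y : R) :
  0 <= a -> a < (1 - a) * `|c - c'| -> 0 <= x <= 1 -> 0 <= y <= 1 ->
  a * x + (1 - a) * c != a * y + (1 - a) * c'.
Proof.
move=> a_ge0 a_lt x01 y01; apply/eqP => fxy.
have shift : (1 - a) * (c - c') = a * (y - x) by lra.
have yx_le1 : `|y - x| <= 1.
  by rewrite ler_norml; apply/andP; split; lra.
have : (1 - a) * `|c - c'| <= a.
  apply: le_trans (ler_norm _) _.
  by rewrite normrM normr_id -normrM shift normrM ger0_norm // ler_piMr.
by rewrite leNgt a_lt.
Qed.

Definition offset (R : realType) (d : nat) (K : 'M[R]_d) (j : 'I_d)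
    (eps : 'I_d -> bool) : R :=
  \sum_(i < d) (eps i)%:R * K i j.

Lemma offset_ffun (R : realType) (d : nat) (K : 'M[R]_d) j (eps : 'I_d -> bool) :
  offset K j [ffun i => eps i] = offset K j eps.
Proof. by apply: eq_bigr => i _; rewrite ffunE. Qed.

Theorem mainTheorem5 (R : realType) (d : nat) (K : 'M[R]_d) :
  interaction_matrix K ->
  exists a0 : R, 0 < a0 /\
    forall (a : R), 0 <= a -> a <= 1 -> a < a0 ->
    forall (s : 'M[int]_d) (T : 'M[R]_d), compatible K s T ->
      coord_injective K a.
Proof.
move=> _.
have [delta delta_gt0 gap] :=
  finite_gap (fun p : 'I_d * {ffun 'I_d -> bool} => offset K p.1 p.2).
exists (delta / (1 + delta)); split; first by apply: divr_gt0; lra.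
move=> a a_ge0 a_le1 a_lt _ _ _ j f f' [eps ->] [eps' ->] ff' x y x01 y01.
apply/eqP; apply: affine_images_disjoint => //.
have offset_neq : offset K j eps != offset K j eps'.
  by apply: contra_notN ff'; rewrite /offset => /eqP ->.
have := gap (j, [ffun i => eps i]) (j, [ffun i => eps' i]).
rewrite /= !offset_ffun => /(_ offset_neq) delta_le.
rewrite ltr_pdivlMr in a_lt; last by lra.
have : (1 - a) * delta <= (1 - a) * `|offset K j eps - offset K j eps'|.
  by rewrite ler_wpM2l //; lra.
lra.
Qed.
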